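(* Let $F=\{f_i\}_{i=1}^N$ be a uniform tight frame for an $n$-dimensional Hilbert space $\mathcal{H}_n$ such that $|\langle f_i,f_j\rangle|$ is the same constant for all $i\ne j$, and let $p>1$. Then every element of $\zeta_{\mathfrak{F}}^{(1),p}(F)$ is a $1$-uniform dual of $F$.
   Context: A frame $F$ is tight if $\sum_i|\langle f,f_i\rangle|^2=A\|f\|^2$ for all $f$ and some $A>0$; uniform tight if in addition all $\|f_i\|$ are equal. $G=\{g_i\}_{i=1}^N$ is a dual of $F$ if $f=\sum_i\langle f,f_i\rangle g_i$ for all $f\in\mathcal{H}_n$. A dual $G$ is $1$-uniform if $\langle f_i,g_i\rangle$ is the same constant for all $i$. For a dual $G$, $\mathrm{AE}_{\mathfrak{F}}^{(1),p}(F,G)=\{\frac1N\sum_{i=1}^N(\|f_i\|\,\|g_i\|)^p\}^{1/p}$ (the $\ell^p$-average over single erasures of the Frobenius norm of the error operator $f\mapsto\langle f,f_i\rangle g_i$), and $\zeta_{\mathfrak{F}}^{(1),p}(F)$ is the set of duals of $F$ minimizing this quantity over all duals. *)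

From HB Require Import structures.
From mathcomp Require Import all_boot all_order all_algebra.
From mathcomp Require Import reals exp.
From mathcomp.real_closed Require Import complex.
Set Implicit Arguments. Unset Strict Implicit. Unset Printing Implicit Defensive.
Import Order.TTheory GRing.Theory Num.Theory.
Local Open Scope ring_scope.

(* The n-dimensional (complex) Hilbert space H_n is modelled as C^n with
   C = R[i], R : realType; vectors are functions 'I_n -> R[i]. *)
Definition vec (R : realType) (n : nat) := 'I_n -> R[i].

Definition ip (R : realType) (n : nat) (f g : vec R n) : R[i] :=
  \sum_(k < n) f k * conjc (g k).

Definition cabs (R : realType) (z : R[i]) : R := Normc.normc z.

Definition vnorm (R : realType) (n : nat) (f : vec R n) : R :=
  Num.sqrt (\sum_(k < n) cabs (f k) ^+ 2).

Definition tight_frame (R : realType) (n N : nat) (F : 'I_N -> vec R n) : Prop :=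
  exists A : R, 0 < A /\
    forall f : vec R n, \sum_(i < N) cabs (ip f (F i)) ^+ 2 = A * vnorm f ^+ 2.

Definition uniform_tight_frame (R : realType) (n N : nat) (F : 'I_N -> vec R n) : Prop :=
  tight_frame F /\ forall i j : 'I_N, vnorm (F i) = vnorm (F j).

Definition equiangular (R : realType) (n N : nat) (F : 'I_N -> vec R n) : Prop :=
  exists c : R, forall i j : 'I_N, i != j -> cabs (ip (F i) (F j)) = c.

Definition is_dual (R : realType) (n N : nat) (F G : 'I_N -> vec R n) : Prop :=
  forall f : vec R n, forall k : 'I_n, f k = \sum_(i < N) ip f (F i) * G i k.

Definition one_uniform_dual (R : realType) (n N : nat) (F G : 'I_N -> vec R n) : Prop :=
  is_dual F G /\ exists c : R[i], forall i : 'I_N, ip (F i) (G i) = c.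

Definition AE1p (R : realType) (n N : nat) (p : R) (F G : 'I_N -> vec R n) : R :=
  powR (N%:R^-1 * \sum_(i < N) powR (vnorm (F i) * vnorm (G i)) p) p^-1.

(* G belongs to zeta_F^{(1),p}(F): a dual of F minimizing AE1p over all duals *)
Definition optimal_dual_1p (R : realType) (n N : nat) (p : R) (F G : 'I_N -> vec R n) : Prop :=
  is_dual F G /\ forall H : 'I_N -> vec R n, is_dual F H -> AE1p p F G <= AE1p p F H.

From HB Require Import structures.
From mathcomp Require Import all_boot all_order all_algebra.
From mathcomp Require Import reals exp.
From mathcomp.real_closed Require Import complex.
From mathcomp Require Import ring lra.

(* If G is a dual of F then sum_i <g_i, f_i> = n (the trace of the identity),
   so by Cauchy-Schwarz the products a_i = ||f_i|| ||g_i|| satisfy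
   sum_i a_i >= n.  For a tight frame with bound A the canonical dual is
   A^-1 f_i, and when F is uniform its products ||f_i|| ||A^-1 f_i|| all equal
   c = n / N.  An optimal dual thus has sum_i a_i^p <= N c^p and
   sum_i a_i >= N c; by strict convexity of t |-> t^p (p > 1) every a_i = c.
   Then |<g_i, f_i>| <= c while sum_i <g_i, f_i> = N c, which forces
   <g_i, f_i> = c for all i. *)

Set Implicit Arguments.
Unset Strict Implicit.
Unset Printing Implicit Defensive.

Import Order.TTheory GRing.Theory Num.Theory.
Local Open Scope ring_scope.
Local Open Scope complex_scope.

Section Modulus.
Variable R : realType.
Implicit Types (x : R) (z w : R[i]).

Lemma cabsE z : `|z| = (cabs z)%:C.
Proof. by []. Qed.

Lemma cabs_ge0 z : 0 <= cabs z.
Proof. by case: z => a b; exact: sqrtr_ge0. Qed.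

Lemma cabs_real x : cabs x%:C = `|x|.
Proof. by rewrite /cabs /= expr0n addr0 sqrtr_sqr. Qed.

Lemma cabsM z w : cabs (z * w) = cabs z * cabs w.
Proof. exact: Normc.normcM. Qed.

Lemma cabs_conj z : cabs (conjc z) = cabs z.
Proof. by case: z => a b; rewrite /cabs /= sqrrN. Qed.

Lemma sqr_cabsC z : ((cabs z) ^+ 2)%:C = z * conjc z.
Proof. by rewrite -normCK cabsE -rmorphXn. Qed.

Lemma cabs_sum I (r : seq I) (P : pred I) (f : I -> R[i]) :
  cabs (\sum_(i <- r | P i) f i) <= \sum_(i <- r | P i) cabs (f i).
Proof. by rewrite -lecR -cabsE rmorph_sum; exact: ler_norm_sum. Qed.

End Modulus.

Lemma sum_mul_sqr_le (R : realFieldType) n (x y : 'I_n -> R) :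
  (\sum_k x k * y k) ^+ 2 <= (\sum_k x k ^+ 2) * (\sum_k y k ^+ 2).
Proof.
pose g j k := x j ^+ 2 * y k ^+ 2 - x j * y j * (x k * y k).
have lagrange : \sum_j \sum_k (x j * y k - x k * y j) ^+ 2 =
    ((\sum_k x k ^+ 2) * (\sum_k y k ^+ 2) - (\sum_k x k * y k) ^+ 2) *+ 2.
  have -> : \sum_j \sum_k (x j * y k - x k * y j) ^+ 2 =
      \sum_j \sum_k g j k + \sum_j \sum_k g k j.
    rewrite -big_split; apply: eq_bigr => j _ /=.
    by rewrite -big_split; apply: eq_bigr => k _; rewrite /g /=; ring.
  rewrite [X in _ + X]exchange_big /= -mulr2n expr2 !big_distrlr -sumrB.
  by congr (_ *+ 2); apply: eq_bigr => j _; rewrite -sumrB.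
rewrite -subr_ge0 -(pmulrn_lge0 _ (isT : (0 < 2)%N)) -lagrange.
by do 2!(apply: sumr_ge0 => ? _); exact: sqr_ge0.
Qed.

Section InnerProduct.
Variables (R : realType) (n : nat).
Implicit Types (f g h : vec R n) (t : R[i]).

Lemma vnorm_ge0 f : 0 <= vnorm f.
Proof. exact: sqrtr_ge0. Qed.

Lemma sqr_vnorm f : vnorm f ^+ 2 = \sum_k cabs (f k) ^+ 2.
Proof. by rewrite sqr_sqrtr // sumr_ge0 // => k _; exact: sqr_ge0. Qed.

Lemma sqr_vnormC f : (vnorm f ^+ 2)%:C = ip f f.
Proof.
by rewrite sqr_vnorm rmorph_sum; apply: eq_bigr => k _; exact: sqr_cabsC.
Qed.

Lemma ip_conj f g : conjc (ip f g) = ip g f.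
Proof.
rewrite /ip rmorph_sum; apply: eq_bigr => k _.
by rewrite rmorphM /= conjcK mulrC.
Qed.

Lemma cauchy_schwarz f g : cabs (ip f g) <= vnorm f * vnorm g.
Proof.
rewrite /ip; apply: le_trans (cabs_sum _ _ _) _.
under eq_bigr do rewrite cabsM cabs_conj.
rewrite -sqrtrM ?sumr_ge0 // => [|k _]; last exact: sqr_ge0.
rewrite -(ger0_norm (sumr_ge0 _ _)) => [|k _]; last first.
  by rewrite mulr_ge0 ?cabs_ge0.
rewrite -sqrtr_sqr ler_sqrt ?sum_mul_sqr_le //.
by rewrite mulr_ge0 // sumr_ge0 // => k _; exact: sqr_ge0.
Qed.

Lemma vnormZ (r : R) f : 0 <= r -> vnorm (fun k => r%:C * f k) = r * vnorm f.
Proof.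
move=> r_ge0; rewrite /vnorm.
under eq_bigr do rewrite cabsM cabs_real ger0_norm // exprMn.
by rewrite -mulr_sumr sqrtrM ?sqr_ge0 // sqrtr_sqr ger0_norm.
Qed.

Definition basis_vec (l : 'I_n) : vec R n := fun k => (k == l)%:R.

Lemma ip_basis_vecl l f : ip (basis_vec l) f = conjc (f l).
Proof.
rewrite /ip (bigD1 l) //= /basis_vec eqxx mul1r big1 ?addr0 // => k /negbTE ->.
by rewrite mul0r.
Qed.

Lemma ip_basis_vecr l f : ip f (basis_vec l) = f l.
Proof. by rewrite -ip_conj ip_basis_vecl conjcK. Qed.

Lemma ip_combl f g t h : ip (fun k => f k + t * g k) h = ip f h + t * ip g h.
Proof.
rewrite /ip mulr_sumr -big_split; apply: eq_bigr => k _ /=; ring.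
Qed.

Lemma ip_combr f g t h :
  ip h (fun k => f k + t * g k) = ip h f + conjc t * ip h g.
Proof. by rewrite -ip_conj ip_combl rmorphD rmorphM /= !ip_conj. Qed.

Lemma dual_trace N (F G : 'I_N -> vec R n) :
  is_dual F G -> \sum_(i < N) ip (G i) (F i) = n%:R.
Proof.
move=> dualFG; rewrite exchange_big /= -[n in RHS]card_ord -sumr_const.
apply: eq_bigr => l _.
have -> : 1 = basis_vec l l by rewrite /basis_vec eqxx.
rewrite (dualFG (basis_vec l) l).
by apply: eq_bigr => i _; rewrite ip_basis_vecl mulrC.
Qed.

Lemma dual_sum_vnormM_ge N (F G : 'I_N -> vec R n) :
  is_dual F G -> n%:R <= \sum_(i < N) vnorm (F i) * vnorm (G i).
Proof.
move=> dualFG.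
rewrite -(ger0_norm (ler0n _ n)) -cabs_real rmorph_nat -(dual_trace dualFG).
apply: le_trans (cabs_sum _ _ _) (ler_sum _ _) => i _.
by rewrite mulrC cauchy_schwarz.
Qed.

End InnerProduct.

Arguments basis_vec {R n} l.

Section TightFrame.
Variables (R : realType) (n N : nat) (F : 'I_N -> vec R n) (A : R).
Implicit Types (f u v : vec R n) (t : R[i]).

(* The sesquilinear form of S - A, S = sum_i f_i f_i^* being the frame
   operator; tightness says that its quadratic form vanishes. *)
Definition frame_defect u v :=
  \sum_(i < N) ip u (F i) * conjc (ip v (F i)) - A%:C * ip u v.

Lemma frame_defect_comb u v t :
  frame_defect (fun k => u k + t * v k) (fun k => u k + t * v k) =
  frame_defect u u + conjc t * frame_defect u v + t * frame_defect v u
  + t * conjc t * frame_defect v v.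
Proof.
rewrite /frame_defect ip_combl !ip_combr.
have -> : \sum_(i < N) ip (fun k => u k + t * v k) (F i) *
                       conjc (ip (fun k => u k + t * v k) (F i)) =
    \sum_(i < N) (ip u (F i) * conjc (ip u (F i))
                  + conjc t * (ip u (F i) * conjc (ip v (F i)))
                  + t * (ip v (F i) * conjc (ip u (F i)))
                  + t * conjc t * (ip v (F i) * conjc (ip v (F i)))).
  by apply: eq_bigr => i _; rewrite ip_combl rmorphD rmorphM /=; ring.
rewrite !big_split /= -!mulr_sumr; ring.
Qed.

Hypothesis tightF : forall f,
  \sum_(i < N) cabs (ip f (F i)) ^+ 2 = A * vnorm f ^+ 2.

Lemma frame_defect_diag u : frame_defect u u = 0.
Proof.
apply/eqP; rewrite subr_eq0 -sqr_vnormC -rmorphM -tightF /= rmorph_sum.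
by apply/eqP/eq_bigr => i _; rewrite -sqr_cabsC.
Qed.

Lemma frame_defect_eq0 u v : frame_defect u v = 0.
Proof.
(* Polarization, with t = 1 and t = 'i in frame_defect_comb. *)
have conjc_i : conjc 'i = - 'i :> R[i].
  by apply/eqP; rewrite eq_complex /= oppr0 !eqxx.
have := frame_defect_comb u v 1; have := frame_defect_comb u v 'i.
rewrite !frame_defect_diag rmorph1 conjc_i !mulr0 !addr0 !add0r !mul1r.
move=> sym_i sym_1.
have anti : frame_defect u v - frame_defect v u = 0.
  rewrite -[RHS](mulr0 'i) sym_i mulrDr !mulrA mulrN -expr2 sqr_i; ring.
have : frame_defect u v *+ 2 = 0 by rewrite mulr2n {2}(subr0_eq anti) sym_1.
by move/eqP; rewrite mulrn_eq0 => /eqP.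
Qed.

Lemma tight_frame_reconstruction f l :
  \sum_(i < N) ip f (F i) * F i l = A%:C * f l.
Proof.
have /eqP := frame_defect_eq0 f (basis_vec l).
rewrite subr_eq0 ip_basis_vecr => /eqP <-.
by apply: eq_bigr => i _; rewrite ip_basis_vecl conjcK.
Qed.

Definition canonical_dual : 'I_N -> vec R n := fun i k => (A^-1)%:C * F i k.

Lemma is_dual_canonical : A != 0 -> is_dual F canonical_dual.
Proof.
move=> A_neq0 f k; rewrite /canonical_dual.
under eq_bigr do rewrite mulrCA.
rewrite -mulr_sumr tight_frame_reconstruction mulrA -rmorphM /=.
by rewrite mulVf // mul1r.
Qed.

End TightFrame.

Section PowerTangent.
Variables (R : realType) (p : R).
Hypothesis p_gt1 : 1 < p.

Let p_gt0 : 0 < p. Proof. exact: lt_trans p_gt1. Qed.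

Lemma powR_ge_tangent1 (t : R) : 0 <= t -> 1 + p * (t - 1) <= t `^ p.
Proof.
move=> t_ge0; have p1_gt0 : 0 < p - 1 by rewrite subr_gt0.
pose q := p / (p - 1).
have q_gt0 : 0 < q by rewrite divr_gt0.
have pq : p^-1 + q^-1 = 1 by rewrite invf_div; field; exact: lt0r_neq0.
have := conjugate_powR t_ge0 ler01 p_gt0 q_gt0 pq.
have -> : t `^ p / p + 1 `^ q / q = (t `^ p + (p - 1)) / p.
  by rewrite powR1 /q; field; rewrite (lt0r_neq0 p_gt0) (lt0r_neq0 p1_gt0).
by rewrite mulr1 ler_pdivlMr // => young; lra.
Qed.

Lemma powR_ge_tangent (m t : R) : 0 < m -> 0 <= t ->
  m `^ p + p * m `^ (p - 1) * (t - m) <= t `^ p.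
Proof.
move=> m_gt0 t_ge0; have m_neq0 := lt0r_neq0 m_gt0.
have tm_ge0 : 0 <= t / m := divr_ge0 t_ge0 (ltW m_gt0).
have -> : t `^ p = m `^ p * (t / m) `^ p.
  by rewrite -powRM ?(ltW m_gt0) // [m * _]mulrC divfK.
rewrite -(mulr_powRB1 (ltW m_gt0) p_gt0).
have -> : m * m `^ (p - 1) + p * m `^ (p - 1) * (t - m) =
          m * m `^ (p - 1) * (1 + p * (t / m - 1)) by field.
by rewrite ler_wpM2l ?powR_ge_tangent1 // mulr_ge0 ?powR_ge0 // ltW.
Qed.

Lemma powR_gt_tangent (m t : R) : 0 < m -> 0 <= t -> t != m ->
  m `^ p + p * m `^ (p - 1) * (t - m) < t `^ p.
Proof.
(* The tangent bounds at m and at the midpoint s add up to the claim plus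
   p (s^(p-1) - m^(p-1)) (t - s), positive since powR _ (p - 1) increases. *)
move=> m_gt0 t_ge0 t_neq_m; pose s := (t + m) / 2.
have s_gt0 : 0 < s by rewrite /s; lra.
have slope_gt0 : 0 < (s `^ (p - 1) - m `^ (p - 1)) * (t - s).
  have incr := @gt0_ltr_powR R (p - 1); rewrite subr_gt0 in incr.
  have [tm|mt|tm] := ltgtP t m; last by rewrite tm eqxx in t_neq_m.
  - have sm : s < m by rewrite /s; lra.
    rewrite -mulrNN mulr_gt0 // ?oppr_gt0 ?subr_lt0; last by rewrite /s; lra.
    by rewrite incr // nnegrE ltW.
  - have ms : m < s by rewrite /s; lra.
    rewrite mulr_gt0 // ?subr_gt0; last by rewrite /s; lra.
    by rewrite incr // nnegrE ltW.
have Tt := powR_ge_tangent s_gt0 t_ge0.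
have Ts := powR_ge_tangent m_gt0 (ltW s_gt0).
have := mulr_gt0 p_gt0 slope_gt0.
have -> : p * ((s `^ (p - 1) - m `^ (p - 1)) * (t - s)) =
  s `^ p + p * s `^ (p - 1) * (t - s) - (m `^ p + p * m `^ (p - 1) * (t - m))
  - (s `^ p - (m `^ p + p * m `^ (p - 1) * (s - m))).
  by ring.
lra.
Qed.

Lemma all_eq_of_sum_powR_le N (a : 'I_N -> R) (c : R) : 0 < c ->
    (forall i, 0 <= a i) ->
    \sum_i a i `^ p <= N%:R * c `^ p -> N%:R * c <= \sum_i a i ->
  forall i, a i = c.
Proof.
move=> c_gt0 a_ge0 sum_powR_le sum_ge.
pose tangent i := c `^ p + p * c `^ (p - 1) * (a i - c).
have gap_ge0 i : 0 <= a i `^ p - tangent i.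
  by rewrite subr_ge0 powR_ge_tangent.
have sum_tangent : \sum_i tangent i =
    N%:R * c `^ p + p * c `^ (p - 1) * (\sum_i a i - N%:R * c).
  by rewrite big_split /= -mulr_sumr sumrB !sumr_const card_ord !mulr_natl.
have sum_gap : \sum_i (a i `^ p - tangent i) = 0.
  apply/eqP; rewrite eq_le sumr_ge0 ?andbT // sumrB sum_tangent subr_le0.
  apply: le_trans sum_powR_le _; rewrite lerDl.
  by rewrite mulr_ge0 ?subr_ge0 // mulr_ge0 ?powR_ge0 // ltW.
move=> i; apply/eqP; apply: contraT => ai_neq_c.
have /eqP := psumr_eq0P (fun j _ => gap_ge0 j) sum_gap (i := i) isT.
by rewrite subr_eq0 gt_eqF //; exact: powR_gt_tangent.
Qed.

End PowerTangent.

Lemma uniform_canonical_dual_product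
    (R : realType) n N (F : 'I_N -> vec R n) A :
    0 < A ->
    (forall f, \sum_(i < N) cabs (ip f (F i)) ^+ 2 = A * vnorm f ^+ 2) ->
    (forall i j, vnorm (F i) = vnorm (F j)) ->
  forall i, vnorm (F i) * vnorm (canonical_dual F A i) = n%:R / N%:R.
Proof.
move=> A_gt0 tightF unifF i.
have N_gt0 : (0 < N)%N := leq_ltn_trans (leq0n i) (ltn_ord i).
have ipH j : ip (canonical_dual F A j) (F j) = (A^-1 * vnorm (F i) ^+ 2)%:C.
  rewrite -(unifF j i) rmorphM /= sqr_vnormC /ip mulr_sumr.
  by apply: eq_bigr => k _; rewrite mulrA.
have := dual_trace (is_dual_canonical tightF (lt0r_neq0 A_gt0)).
under eq_bigr do rewrite ipH.
rewrite sumr_const card_ord -rmorphMn -(rmorph_nat (real_complex R)).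
move=> /complexI.
rewrite /canonical_dual vnormZ ?invr_ge0 ?ltW // -mulr_natl => <-.
by field; rewrite pnatr_eq0 -lt0n N_gt0 lt0r_neq0.
Qed.

Lemma optimal_dual_sum_powR_le (R : realType) n N (F G H : 'I_N -> vec R n) p :
    0 < p -> (0 < N)%N -> optimal_dual_1p p F G -> is_dual F H ->
  \sum_i (vnorm (F i) * vnorm (G i)) `^ p <=
  \sum_i (vnorm (F i) * vnorm (H i)) `^ p.
Proof.
move=> p_gt0 N_gt0 [_ optG] dualH; have := optG H dualH.
apply: contraTT; rewrite -!ltNge => lt_sum.
have sum_ge0 (K : 'I_N -> vec R n) :
    0 <= N%:R^-1 * \sum_i (vnorm (F i) * vnorm (K i)) `^ p.
  by rewrite mulr_ge0 ?invr_ge0 // sumr_ge0 // => i _; exact: powR_ge0.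
by rewrite gt0_ltr_powR ?invr_gt0 ?nnegrE ?sum_ge0 // ltr_pM2l ?invr_gt0 ?ltr0n.
Qed.

Theorem corollary3p5 (R : realType) (n N : nat) (F : 'I_N -> vec R n) (p : R) :
  uniform_tight_frame F -> equiangular F -> 1 < p ->
  forall G : 'I_N -> vec R n, optimal_dual_1p p F G -> one_uniform_dual F G.
Proof.
move=> [[A [A_gt0 tightF]] unifF] _ p_gt1 G optG; have [dualG _] := optG.
split=> //; have [n0|n_gt0] := posnP n.
  by subst n; exists 0 => i; rewrite /ip big_ord0.
pose c : R := n%:R / N%:R; exists c%:C => i.
have N_gt0 : (0 < N)%N := leq_ltn_trans (leq0n i) (ltn_ord i).
have c_gt0 : 0 < c by rewrite divr_gt0 ?ltr0n.
have Nc : N%:R * c = n%:R by rewrite mulrC divfK // pnatr_eq0 -lt0n.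
pose a j := vnorm (F j) * vnorm (G j).
have sum_powR : \sum_j a j `^ p <= N%:R * c `^ p.
  have := optimal_dual_sum_powR_le (lt_trans ltr01 p_gt1) N_gt0 optG
    (is_dual_canonical tightF (lt0r_neq0 A_gt0)).
  under [X in _ <= X -> _]eq_bigr do rewrite uniform_canonical_dual_product //.
  by rewrite sumr_const card_ord -[_ *+ N]mulr_natl.
have sum_a : N%:R * c <= \sum_j a j by rewrite Nc dual_sum_vnormM_ge.
have a_ge0 j : 0 <= a j by rewrite mulr_ge0 ?vnorm_ge0.
have a_c := all_eq_of_sum_powR_le p_gt1 c_gt0 a_ge0 sum_powR sum_a.
have ip_c : forall j, true -> ip (G j) (F j) = c%:C.
  apply: normC_sum_upper => [j _|].
    by rewrite cabsE lecR -(a_c j) /a mulrC cauchy_schwarz.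
  rewrite dual_trace // sumr_const card_ord -(rmorphMn _ N c).
  by rewrite -(mulr_natl c N) Nc rmorph_nat.
by rewrite -ip_conj ip_c ?conjc_real.
Qed.
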